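(* Given an instance with goods and identical valuations (all agents have the same value function $v$ on items and the same quantile $\tau$) with $m=kn$, the greedy algorithm below returns a balanced allocation of maximum utilitarian social welfare among balanced allocations. Greedy algorithm: set $P\leftarrow M$, $N'\leftarrow N$, and $k_i\leftarrow\min(k,\,k-\lceil\tau_i k\rceil+1)$ for each $i$. While $P\neq\emptyset$: for each $i\in N'$ let $S_i$ be a subset of $P$ of size $k_i$ maximizing $\sum_{g\in S_i}v_i(g)$; let $i^*\in N'$ maximize $v_{i^*}(S_{i^*})$; set $A_{i^*}\leftarrow S_{i^*}$, $P\leftarrow P\setminus A_{i^*}$, $N'\leftarrow N'\setminus\{i^*\}$. Finally allocate any remaining items arbitrarily so that $|A_i|=k$ for all $i\in N$.
   Context: There is a set $N$ of $n$ agents and a set $M$ of $m$ indivisible items. Each agent $i$ has a value $v_i(g)\ge0$ for each item and a quantile $\tau_i\in[0,1]$; here $v_i=v$ and $\tau_i=\tau$ for all $i$. For a nonempty bundle $S\subseteq M$, order its items as $g_1,\dots,g_{|S|}$ with $v_i(g_1)\le\dots\le v_i(g_{|S|})$; then $v_i(S)=v_i(g_{\lceil \tau_i|S|\rceil})$ if $\tau_i>0$ and $v_i(S)=v_i(g_1)$ if $\tau_i=0$. An allocation is an $n$-partition $A=(A_1,\dots,A_n)$ of $M$; when $m=kn$ it is balanced if $|A_i|=k$ for all $i$. $\mathrm{USW}(A)=\sum_{i\in N}v_i(A_i)$. *)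

From HB Require Import structures.
From mathcomp Require Import all_boot all_order all_algebra.
Set Implicit Arguments. Unset Strict Implicit. Unset Printing Implicit Defensive.
Import Order.TTheory GRing.Theory Num.Theory.
Local Open Scope ring_scope.

Section QuantileAlloc.
(* Identical valuations: one value function v and one quantile tau for all agents. *)
Variables (R : archiRealFieldType) (M : finType) (n k : nat) (v : M -> R) (tau : R).

(* 0-based index of the item g_{ceil(tau |S|)} (or g_1 when tau = 0) in the
   nondecreasing ordering of a bundle of size s. *)
Definition qidx (s : nat) : nat :=
  if 0 < tau then (absz (Num.ceil (tau * s%:R))).-1 else 0%N.

(* quantile value of a bundle: v(g_{ceil(tau|S|)}) (0 for the empty bundle) *)
Definition bval (S : {set M}) : R :=
  nth 0 (sort <=%R [seq v g | g <- enum S]) (qidx #|S|).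

Definition USW (A : {ffun 'I_n -> {set M}}) : R := \sum_(i < n) bval (A i).

Definition is_alloc (A : {ffun 'I_n -> {set M}}) : Prop :=
  (forall i j, i != j -> [disjoint A i & A j]) /\ \bigcup_(i < n) A i = [set: M].

Definition balanced (A : {ffun 'I_n -> {set M}}) : Prop :=
  is_alloc A /\ forall i, #|A i| = k.

Definition kq : nat :=
  absz (Num.min (k%:Z) (k%:Z - Num.ceil (tau * k%:R) + 1)).

Definition best_subset (P T : {set M}) : Prop :=
  [/\ T \subset P, #|T| = kq &
      forall T' : {set M}, T' \subset P -> #|T'| = kq ->
        \sum_(g in T') v g <= \sum_(g in T) v g].

Inductive greedy_reach : {set M} -> {set 'I_n} -> {ffun 'I_n -> {set M}} -> Prop :=
| gr_init : greedy_reach [set: M] [set: 'I_n] [ffun => set0]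
| gr_step (P : {set M}) (N' : {set 'I_n}) (A : {ffun 'I_n -> {set M}})
    (S : 'I_n -> {set M}) (istar : 'I_n) :
    greedy_reach P N' A ->
    P != set0 ->
    istar \in N' ->
    (forall i, i \in N' -> best_subset P (S i)) ->
    (forall i, i \in N' -> bval (S i) <= bval (S istar)) ->
    greedy_reach (P :\: S istar) (N' :\ istar)
      [ffun j => if j == istar then S istar else A j].

(* B is a possible output: the loop has stopped (P empty, or no agents left),
   and B is a balanced allocation obtained by allocating the remaining items
   arbitrarily, i.e. extending each A_i. *)
Definition greedy_output (B : {ffun 'I_n -> {set M}}) : Prop :=
  exists P N' A, [/\ greedy_reach P N' A, (P = set0 \/ N' = set0),
                     balanced B & forall i, A i \subset B i].

End QuantileAlloc.

From HB Require Import structures.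
From mathcomp Require Import all_boot all_order all_algebra.
From mathcomp Require Import zify.
Import Order.TTheory GRing.Theory Num.Theory.
Set Implicit Arguments. Unset Strict Implicit. Unset Printing Implicit Defensive.
Local Open Scope ring_scope.

(* For a bundle S with |S| = k, v(S) >= t iff S contains at least
   kq = k - ceil(tau k) + 1 items of value >= t.  So in a balanced allocation at
   most |{g | v g >= t}| / kq agents reach value t.  Greedy hands out blocks of
   the kq most valuable remaining items; if some block contains an item below
   t, then every item of value >= t lies in an earlier block (all of whose
   items are >= t) or among fewer than kq items of that block, so greedy makes
   at least as many agents reach t.  Comparing these counts for every
   threshold t compares the sums. *)

Section Majorization.
Variable R : realDomainType.

Lemma exists_max (T : eqType) (f : T -> R) (s : seq T) : s != [::] ->
  exists2 x, x \in s & forall y, y \in s -> f y <= f x.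
Proof.
elim: s => [//|a [|b s] IH] _.
  by exists a => [|y]; rewrite ?mem_head // inE => /eqP->.
have [x xs xmax] := IH isT.
have [fax|fxa] := leP (f a) (f x).
  exists x => [|y]; first by rewrite inE xs orbT.
  by rewrite inE => /predU1P[->|/xmax].
exists a => [|y]; first exact: mem_head.
by rewrite inE => /predU1P[->//|/xmax fyx]; exact: le_trans fyx (ltW fxa).
Qed.

Lemma sorted_le_nthE (l : seq R) i t : sorted <=%R l -> (i < size l)%N ->
  (t <= nth 0 l i) = (size l - i <= count (>= t) l)%N.
Proof.
move=> sl il.
have mono j j' : (j <= j')%N -> (j' < size l)%N -> nth 0 l j <= nth 0 l j'.
  move=> jj' j'l; apply: (sorted_leq_nth le_trans lexx) => //.
  by rewrite inE (leq_ltn_trans jj' j'l).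
apply/idP/idP => [ti | ].
  have all_ge : count (>= t) (drop i l) = size (drop i l).
    apply/eqP; rewrite -all_count; apply/(all_nthP 0) => j.
    rewrite size_drop ltn_subRL nth_drop => jl.
    exact: le_trans ti (mono _ _ (leq_addr _ _) jl).
  by rewrite -[l in X in (_ <= X)%N](cat_take_drop i) count_cat all_ge size_drop leq_addl.
apply: contraLR; rewrite -ltNge -ltnNge => lt_it.
have none_ge : count (>= t) (take i.+1 l) = 0%N.
  apply/eqP; rewrite -leqn0 leqNgt -has_count -all_predC; apply/(all_nthP 0) => j.
  rewrite size_take_min leq_min ltnS => /andP[ji jl]; rewrite /= nth_take // -ltNge.
  exact: le_lt_trans (mono _ _ ji il) lt_it.
rewrite -[l in X in (X < _)%N](cat_take_drop i.+1) count_cat none_ge add0n.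
apply: leq_ltn_trans (count_size _ _) _.
by rewrite size_drop subnS ltn_predL subn_gt0.
Qed.

Lemma ler_sum_count (b c : seq R) : size b = size c ->
  (forall t, (count (>= t) b <= count (>= t) c)%N) ->
  \sum_(x <- b) x <= \sum_(x <- c) x.
Proof.
(* Pair a maximum of [b] with a maximum of [c] and recurse on the rest. *)
move Nc : (size c) => N; elim: N b c Nc => [|N IH] b c Nc Nb count_bc.
  by rewrite (size0nil Nb) (size0nil Nc) !big_nil.
have [x xb xmax] : exists2 x, x \in b & forall y, y \in b -> y <= x.
  by apply: (exists_max id); rewrite -size_eq0 Nb.
have [y yc ymax] : exists2 y, y \in c & forall z, z \in c -> z <= y.
  by apply: (exists_max id); rewrite -size_eq0 Nc.
have le_xy : x <= y.
  have /hasP[z zc xz] : has (>= x) c.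
    by rewrite has_count (leq_trans _ (count_bc x)) // -has_count; apply/hasP; exists x.
  exact: le_trans xz (ymax z zc).
rewrite (perm_big _ (perm_to_rem xb)) (perm_big _ (perm_to_rem yc)) !big_cons lerD //.
apply: IH; rewrite ?size_rem ?Nb ?Nc // => t.
rewrite !count_rem xb yc /=.
have [tx|xt] := leP t x; first by rewrite (le_trans tx le_xy) leq_sub2r.
suff -> : count (>= t) b = 0%N by [].
apply/eqP; rewrite -leqn0 leqNgt -has_count; apply/hasP => -[z zb tz].
by have := le_lt_trans (xmax z zb) xt; rewrite ltNge tz.
Qed.

Lemma ler_sum_card (I : finType) (f g : I -> R) :
  (forall t, (#|[set i | (t <= f i)%R]| <= #|[set i | (t <= g i)%R]|)%N) ->
  \sum_i f i <= \sum_i g i.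
Proof.
move=> card_fg.
have sum_map (h : I -> R) : \sum_i h i = \sum_(x <- map h (index_enum I)) x.
  by rewrite big_map.
rewrite !sum_map; apply: ler_sum_count; first by rewrite !size_map.
by move=> t; rewrite !count_map -!sum1_count !sum1dep_card; exact: card_fg.
Qed.

End Majorization.

Section DisjointFamily.
Variables (I T : finType).

Definition disjoint_family (F : I -> {set T}) :=
  forall i j, i != j -> [disjoint F i & F j].

Lemma card_bigcup_disjoint (F : I -> {set T}) : disjoint_family F ->
  #|\bigcup_i F i| = (\sum_i #|F i|)%N.
Proof.
move=> dF; rewrite -sum1_card partition_disjoint_bigcup //.
by apply: eq_bigr => i _; rewrite sum1_card.
Qed.

Lemma card_split_family (F : I -> {set T}) (X : {set T}) : disjoint_family F ->
  #|X| = (#|X :\: \bigcup_i F i| + \sum_i #|X :&: F i|)%N.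
Proof.
move=> dF; rewrite -(cardsID (\bigcup_i F i) X) addnC.
have -> : X :&: \bigcup_i F i = \bigcup_i (X :&: F i).
  apply/setP => x; rewrite inE; apply/andP/bigcupP => [[xX /bigcupP[i _ xF]]|[i _]].
    by exists i; rewrite // inE xX.
  by rewrite inE => /andP[xX xF]; split => //; apply/bigcupP; exists i.
rewrite card_bigcup_disjoint // => i j ij.
exact: disjointW (subsetIr _ _) (subsetIr _ _) (dF _ _ ij).
Qed.

Definition assign (A : {ffun I -> {set T}}) (i0 : I) (X : {set T}) :=
  [ffun j => if j == i0 then X else A j].

Lemma assign_disjoint (A : {ffun I -> {set T}}) i0 (X : {set T}) : disjoint_family A ->
  (forall j, j != i0 -> [disjoint X & A j]) -> disjoint_family (assign A i0 X).
Proof.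
move=> dA dX i j ij; rewrite !ffunE.
have [ei | ni] := eqVneq i i0; have [ej | nj] := eqVneq j i0.
- by rewrite ei ej eqxx in ij.
- exact: dX.
- by rewrite disjoint_sym; apply: dX.
- exact: dA.
Qed.

Lemma bigcup_assign (A : {ffun I -> {set T}}) i0 (X : {set T}) : A i0 \subset X ->
  \bigcup_j assign A i0 X j = X :|: \bigcup_j A j.
Proof.
move=> AX; rewrite (bigD1 i0) // [in RHS](bigD1 i0) //= ffunE eqxx setUA (setUidPl AX).
by congr (_ :|: _); apply: eq_bigr => j /negbTE nj; rewrite ffunE nj.
Qed.

End DisjointFamily.

Section Extension.
Variables (M : finType) (n k : nat).
Hypothesis hm : #|M| = (k * n)%N.

Lemma card_bigcup_deficit (A : {ffun 'I_n -> {set M}}) :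
  disjoint_family A -> (forall i, #|A i| <= k)%N ->
  (#|\bigcup_i A i| + \sum_i (k - #|A i|) = #|M|)%N.
Proof.
move=> disjA leAk; rewrite card_bigcup_disjoint // -big_split /= hm.
by rewrite (eq_bigr (fun _ => k)) => [|i _]; [rewrite sum_nat_const card_ord mulnC | exact: subnKC].
Qed.

Lemma balanced_extension (A : {ffun 'I_n -> {set M}}) :
  disjoint_family A -> (forall i, #|A i| <= k)%N ->
  exists2 B, balanced k B & forall i, A i \subset B i.
Proof.
move dA : (\sum_i (k - #|A i|))%N => d.
elim: d A dA => [|d IH] A dA disjA leAk;
  have cover_def := card_bigcup_deficit disjA leAk.
- exists A => //; split; first split=> //.
    by apply/eqP; rewrite eqEcard subsetT cardsT /= -cover_def dA addn0.
  move=> i; apply/eqP; rewrite eqn_leq leAk -subn_eq0.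
  by move/eqP: dA; rewrite sum_nat_eq0 => /forallP/(_ i).
- have [i0 lt_i0k] : exists i0, (#|A i0| < k)%N.
    have : (0 < \sum_i (k - #|A i|))%N by rewrite dA.
    by rewrite lt0n sum_nat_eq0 negb_forall => /existsP[i0]; rewrite subn_eq0 -ltnNge; exists i0.
  have [x xA] : exists x, x \notin \bigcup_i A i.
    have : (0 < #|~: \bigcup_i A i|)%N.
      by have := cardsC (\bigcup_i A i); rewrite -cover_def dA; lia.
    by case/card_gt0P => x; rewrite inE; exists x.
  have xAj j : x \notin A j by apply: contra xA => xAj; apply/bigcupP; exists j.
  have [|||B balB subB] := IH (assign A i0 (x |: A i0)).
  + rewrite (bigD1 i0) //= ffunE eqxx cardsU1 xAj.
    move: dA; rewrite (bigD1 i0) //= (eq_bigr (fun j => k - #|assign A i0 (x |: A i0) j|))%N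
      => [sum_d | j /negbTE nj]; last by rewrite ffunE nj.
    by apply: succn_inj; rewrite -sum_d add1n -addSn subnSK.
  + apply: assign_disjoint => // j ji0.
    rewrite disjoint_subset; apply/subsetP => y; rewrite !inE => /predU1P[-> | yA].
      exact: xAj.
    by rewrite (disjointFr (disjA _ _ _) yA) // eq_sym.
  + by move=> i; rewrite ffunE; case: eqP => _ //; rewrite cardsU1 xAj.
  exists B => // i; apply: subset_trans (subB i); rewrite ffunE.
  by case: eqP => [->|_]; [exact: subsetU1 | exact: subxx].
Qed.
End Extension.

Section Quantile.
Variables (R : archiRealFieldType) (M : finType) (k : nat) (v : M -> R) (tau : R).
Hypothesis ht1 : tau <= 1.

Local Notation kq := (kq k tau).

Lemma ceil_tau_le : Num.ceil (tau * k%:R) <= k%:Z.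
Proof.
rewrite ceil_le_int; apply: le_trans (ler_wpM2r (ler0n _ _) ht1) _.
by rewrite mul1r pmulrn.
Qed.

Lemma kq_le : (kq <= k)%N.
Proof. by have := ceil_tau_le; rewrite /kq; lia. Qed.

Lemma kq_gt0 : (0 < k)%N -> (0 < kq)%N.
Proof. by have := ceil_tau_le; rewrite /kq; lia. Qed.

Hypothesis ht0 : 0 <= tau.

Lemma qidx_add_kq : (qidx tau k + kq = k)%N.
Proof.
have := ceil_tau_le; rewrite /qidx /kq.
have [tau_gt0 | tau_le0] := ltP 0 tau.
  have : 0 <= Num.ceil (tau * k%:R) by rewrite ceil_ge0 (lt_le_trans (ltrN10 _)) ?mulr_ge0.
  lia.
have -> : tau = 0 by apply/le_anti; rewrite tau_le0 ht0.
by rewrite mul0r ceil0; lia.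
Qed.

Definition above (t : R) : {set M} := [set g | t <= v g].

Lemma count_sorted_values (S : {set M}) t :
  count (>= t) (sort <=%R [seq v g | g <- enum S]) = #|S :&: above t|.
Proof.
rewrite (permP (permEl (perm_sort _ _))) count_map cardE.
rewrite (perm_size (enum_setI _ _)) size_filter.
by apply: eq_count => g; rewrite /above !inE.
Qed.

Lemma bval_geE (S : {set M}) t : (0 < k)%N -> #|S| = k ->
  (t <= bval v tau S) = (kq <= #|S :&: above t|)%N.
Proof.
move=> k_gt0 cardS; have kq_pos := kq_gt0 k_gt0; have qidx_kq := qidx_add_kq.
have size_vals : size (sort <=%R [seq v g | g <- enum S]) = k.
  by rewrite size_sort size_map -cardE.
rewrite /bval cardS sorted_le_nthE ?size_vals.
- by rewrite count_sorted_values -{1}qidx_kq addKn.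
- exact/sort_sorted/le_total.
- by rewrite -{2}qidx_kq -addn1 leq_add2l.
Qed.

Lemma best_subset_exchange (P S : {set M}) h g : best_subset k v tau P S ->
  h \in P -> h \notin S -> g \in S -> v h <= v g.
Proof.
case=> SP cardS Smax hP hS gS.
have hSg : h \notin S :\ g by rewrite !inE negb_and hS orbT.
have := Smax (h |: (S :\ g)).
rewrite (big_setU1 _ hSg) (big_setD1 _ gS) lerD2r; apply.
  by rewrite subUset sub1set hP (subset_trans (subsetDl _ _) SP).
by rewrite cardsU1 hSg -cardS (cardsD1 g S) gS.
Qed.

Lemma best_subset_above (P S : {set M}) g t : best_subset k v tau P S ->
  g \in S -> g \notin above t -> (#|above t :&: P| < kq)%N.
Proof.
move=> bestS gS gt; have [_ cardS _] := bestS.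
rewrite -cardS (cardsD1 g S) gS add1n ltnS; apply/subset_leq_card/subsetP => h.
rewrite !inE => /andP[th hP]; apply/andP; split.
  by apply: contraNneq gt => <-; rewrite inE.
apply: contraT => hS; move: gt; rewrite inE.
by rewrite (le_trans th (best_subset_exchange bestS hP hS gS)).
Qed.

Lemma best_subset_exists (P : {set M}) : (kq <= #|P|)%N -> exists S, best_subset k v tau P S.
Proof.
move=> kqP.
set C := enum [set T : {set M} | (T \subset P) && (#|T| == kq)].
have C_neq0 : C != [::].
  apply/eqP => C0; set T := [set x in take kq (enum P)].
  have : T \in C.
    rewrite mem_enum inE; apply/andP; split.
      by apply/subsetP => x; rewrite inE => /mem_take; rewrite mem_enum.
    rewrite cardsE (card_uniqP _) ?take_uniq ?enum_uniq //.
    by rewrite size_takel // -cardE.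
  by rewrite C0.
have [S SC Smax] := exists_max (fun T : {set M} => \sum_(g in T) v g) C_neq0.
move: SC; rewrite mem_enum inE => /andP[SP /eqP cardS].
by exists S; split => // T TP cardT; apply: Smax; rewrite mem_enum inE TP cardT eqxx.
Qed.

Lemma card_above_balanced (n : nat) (A : {ffun 'I_n -> {set M}}) t :
  (0 < k)%N -> balanced k A ->
  (kq * #|[set i | (t <= bval v tau (A i))%R]| <= #|above t|)%N.
Proof.
move=> k_gt0 [[disjA _] cardA]; set I1 := [set i | _].
apply: (@leq_trans (\sum_(i in I1) #|A i :&: above t|)).
  rewrite mulnC -sum_nat_const; apply: leq_sum => i.
  by rewrite inE (bval_geE _ k_gt0 (cardA i)).
apply: (@leq_trans (\sum_i #|A i :&: above t|)).
  by rewrite [X in (_ <= X)%N](bigID (mem I1)) /= leq_addr.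
rewrite -card_bigcup_disjoint; last first.
  by move=> i j ij; exact: disjointW (subsetIl _ _) (subsetIl _ _) (disjA _ _ ij).
by apply: subset_leq_card; apply/bigcupsP => i _; exact: subsetIr.
Qed.

End Quantile.

Lemma USW_balanced0 (R : archiRealFieldType) (M : finType) (n : nat) (v : M -> R) tau
  (B : {ffun 'I_n -> {set M}}) : balanced 0 B -> USW v tau B = 0.
Proof.
case=> _ cardB; rewrite /USW big1 // => i _.
by rewrite /bval (cards0_eq (cardB i)) enum_set0 nth_default // size_sort.
Qed.

Section Greedy.
Variables (R : archiRealFieldType) (M : finType) (n k : nat) (v : M -> R) (tau : R).

Hypotheses (ht0 : 0 <= tau) (ht1 : tau <= 1) (hm : #|M| = (k * n)%N).

Local Notation kq := (kq k tau).
Local Notation above := (above v).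
Local Notation reachable := (@greedy_reach R M n k v tau).

Record greedy_inv (P : {set M}) (N' : {set 'I_n}) (A : {ffun 'I_n -> {set M}}) : Prop :=
  GreedyInv {
    inv_unserved : forall i, i \in N' -> A i = set0;
    inv_served : forall i, i \notin N' -> #|A i| = kq;
    inv_disjoint : disjoint_family A;
    inv_pool : P = ~: \bigcup_i A i;
    inv_pool_below : forall i g h, g \in A i -> h \in P -> v h <= v g;
    (* If some block has an item below [t], the first such block took every
       item of value at least [t] still in the pool, and those are fewer than [kq]. *)
    inv_above : forall t, (forall i, A i \subset above t) \/
      (#|above t| < kq * (#|[set i | (i \notin N') && (A i \subset above t)]|).+1)%N
  }.

Lemma card_pool_served P N' A (X : {set M}) : greedy_inv P N' A ->
  (forall i, i \notin N' -> A i \subset X) ->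
  #|X| = (#|X :&: P| + #|~: N'| * kq)%N.
Proof.
case=> unserved served disjA -> _ _ AX.
rewrite (card_split_family X disjA) setDE; congr (_ + _)%N.
rewrite -sum_nat_const [RHS]big_mkcond /=; apply: eq_bigr => i _; rewrite inE.
have [iN | iN] /= := boolP (i \in N'); first by rewrite unserved // setI0 cards0.
by rewrite (setIidPr (AX i iN)) served.
Qed.

Lemma greedy_inv_init : greedy_inv [set: M] [set: 'I_n] [ffun => set0].
Proof.
split=> [i _ | i | i j _ | | i g h | t]; rewrite ?ffunE ?inE //.
- by rewrite -setI_eq0 set0I.
- by rewrite big1 ?setC0 // => i _; rewrite ffunE.
- by left=> i; rewrite ffunE sub0set.
Qed.

Lemma greedy_inv_step P N' A S istar : greedy_inv P N' A -> istar \in N' ->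
  best_subset k v tau P S ->
  greedy_inv (P :\: S) (N' :\ istar) (assign A istar S).
Proof.
move=> I istarN bestS; case: (I) => unserved served disjA Pdef below above_t.
have [SP cardS _] := bestS.
have assign_served i : i \notin N' -> assign A istar S i = A i.
  by move=> iN; rewrite ffunE; case: eqP iN => // ->; rewrite istarN.
split.
- by move=> i; rewrite !inE ffunE => /andP[/negbTE-> iN]; exact: unserved.
- move=> i; rewrite !inE negb_and negbK => /predU1P[->|iN]; first by rewrite ffunE eqxx.
  by rewrite assign_served // served.
- apply: assign_disjoint => // j _; apply: disjointW SP (bigcup_sup j isT) _.
  by rewrite Pdef -setI_eq0 setIC setICr.
- by rewrite bigcup_assign ?unserved ?sub0set // setCU -Pdef setDE setIC.
- move=> i g h; rewrite ffunE inE; case: eqP => [_ gS | _ gA] /andP[hS hP].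
    exact: best_subset_exchange bestS hP hS gS.
  exact: below gA hP.
move=> t; set new := [set i | _].
have old_new : (#|[set i | (i \notin N') && (A i \subset above t)]| <= #|new|)%N.
  apply/subset_leq_card/subsetP => i; rewrite !inE => /andP[iN Ai].
  by rewrite assign_served // Ai (negbTE iN) andbF.
case: (above_t t) => [allA | lt_old]; last first.
  by right; apply: leq_trans lt_old _; rewrite leq_mul2l ltnS old_new orbT.
have [St | /subsetPn[g gS gt]] := boolP (S \subset above t).
  by left=> i; rewrite ffunE; case: eqP.
right; rewrite (card_pool_served I (fun i _ => allA i)).
have pool_t := best_subset_above bestS gS gt.
have served_new : (#|~: N'| <= #|new|)%N.
  apply/subset_leq_card/subsetP => i; rewrite !inE => iN.
  by rewrite assign_served // allA (negbTE iN) andbF.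
nia.
Qed.

Lemma greedy_reach_inv P N' A : reachable P N' A -> greedy_inv P N' A.
Proof.
elim=> [|{}P {}N' {}A S istar _ IH _ istarN bestS _]; first exact: greedy_inv_init.
exact: greedy_inv_step (bestS _ istarN).
Qed.

Lemma card_pool P N' A : greedy_inv P N' A -> (#|P| + #|~: N'| * kq = k * n)%N.
Proof. by move=> I; rewrite -hm -cardsT (card_pool_served (X := [set: M]) I) ?setTI. Qed.

Lemma greedy_terminates :
  exists P N' A, reachable P N' A /\ (P = set0 \/ N' = set0).
Proof.
suff run m P (N' : {set 'I_n}) A : #|N'| = m -> reachable P N' A ->
    exists P N' A, reachable P N' A /\ (P = set0 \/ N' = set0).
  by apply: run erefl _; exact: gr_init.
elim: m P N' A => [|m IH] P N' A cardN reach.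
  by exists P, N', A; split=> //; right; exact: cards0_eq.
have [P0 | P_neq0] := eqVneq P set0; first by exists P, N', A; split=> //; left.
have [istar istarN] : exists istar, istar \in N' by apply/set0Pn; rewrite -card_gt0 cardN.
have [S bestS] : exists S, best_subset k v tau P S.
  apply: best_subset_exists.
  have := card_pool (greedy_reach_inv reach); have := cardsC N'.
  by rewrite card_ord cardN; have := kq_le k ht1; nia.
apply: IH (gr_step reach P_neq0 istarN (S := fun _ => S) (fun _ _ => bestS) (fun _ _ => lexx _)).
by move: cardN; rewrite (cardsD1 istar) istarN => -[].
Qed.

Lemma greedy_output_exists : exists B, @greedy_output R M n k v tau B.
Proof.
have [P [N' [A [reach stop]]]] := greedy_terminates.
have I := greedy_reach_inv reach.
have [|B balB AB] := balanced_extension hm (inv_disjoint I).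
  move=> i; have [iN | iN] := boolP (i \in N'); first by rewrite (inv_unserved I iN) cards0.
  by rewrite (inv_served I iN) kq_le.
by exists B, P, N', A.
Qed.

Hypothesis hk : (0 < k)%N.

Lemma greedy_serves_all P N' A : greedy_inv P N' A -> (P = set0 \/ N' = set0) -> N' = set0.
Proof.
move=> I [P0 | //]; apply: contraTeq isT => /set0Pn[i iN].
have := card_pool I; rewrite P0 cards0 add0n.
have := cardsC N'; rewrite card_ord; have : (0 < #|N'|)%N by apply/card_gt0P; exists i.
have := kq_le k ht1; nia.
Qed.

Lemma greedy_output_above B t : @greedy_output R M n k v tau B ->
  (forall i, t <= bval v tau (B i)) \/
  (#|above t| < kq * (#|[set i | (t <= bval v tau (B i))%R]|).+1)%N.
Proof.
case=> P [N' [A [reach stop balB AB]]].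
have I := greedy_reach_inv reach; have N'0 := greedy_serves_all I stop.
have bval_above i : A i \subset above t -> t <= bval v tau (B i).
  move=> At; rewrite (bval_geE _ ht1 ht0 _ hk (balB.2 i)).
  by rewrite -(inv_served I (i := i)) ?N'0 ?inE // subset_leq_card // subsetI AB At.
case: (inv_above I t) => [allA | lt_t]; [left=> i | right]; first exact: bval_above.
apply: leq_trans lt_t _; rewrite leq_mul2l ltnS; apply/orP; right.
by apply/subset_leq_card/subsetP => i; rewrite !inE => /andP[_ /bval_above].
Qed.

Lemma greedy_output_optimal B (A : {ffun 'I_n -> {set M}}) :
  @greedy_output R M n k v tau B -> balanced k A -> USW v tau A <= USW v tau B.
Proof.
move=> outB balA; apply: ler_sum_card => t.
have := card_above_balanced v ht1 ht0 t hk balA.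
case: (greedy_output_above t outB) => [allB | lt_t] le_t.
  by apply/subset_leq_card/subsetP => i _; rewrite inE allB.
by rewrite -ltnS -(ltn_pmul2l (kq_gt0 ht1 hk)); exact: leq_ltn_trans le_t lt_t.
Qed.

End Greedy.

Theorem theorem11 (R : archiRealFieldType) (M : finType) (n k : nat)
    (v : M -> R) (tau : R)
    (hm : #|M| = (k * n)%N)
    (hv : forall g, 0 <= v g)
    (ht0 : 0 <= tau) (ht1 : tau <= 1) :
  (exists B, @greedy_output R M n k v tau B) /\
  (forall B, @greedy_output R M n k v tau B ->
     @balanced M n k B /\
     forall A, @balanced M n k A -> @USW R M n v tau A <= @USW R M n v tau B).
Proof.
split; first exact: greedy_output_exists ht1 hm.
move=> B outB; have balB : balanced k B by case: outB => P [N' [A []]].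
split=> // A balA; have [k0 | k_gt0] := posnP k.
  by move: balA balB; rewrite k0 => /USW_balanced0 -> /USW_balanced0 ->.
exact: (greedy_output_optimal ht0 ht1 hm k_gt0 outB balA).
Qed.
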